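(* Let $m,n$ be monitors with $m\simeq n$, and suppose $m$ is in open reduced normal form. Assume that for some $s\in\mathit{Act}^*$ and variable $x$, $m\xrightarrow{s}m''$ for some $m''$ having $x$ as a summand, and that for no proper prefix $s_p$ of $s$ does $m\xrightarrow{s_p}$ a term having $x$ as a summand. Then $n\xrightarrow{s}n''$ for some $n''$ having $x$ as a summand.
   Context: Monitors: terms $m,n ::= v \mid a.m \mid m+n \mid x$ over a nonempty action set $\mathit{Act}$ and variables $x$, verdicts $v::=\mathit{end}\mid\mathit{yes}\mid\mathit{no}$; closed monitors contain no variables. Terms are considered modulo $x+y=y+x$, $x+(y+z)=(x+y)+z$, $x+x=x$, $x+\mathit{end}=x$; a term $t$ has $x$ as a summand if $t=x+t'$ modulo these laws for some $t'$; $\sum_{i\in I}m_i$ is $\mathit{end}$ for $I=\emptyset$; $v$-free means no occurrence of $v$. Transitions $\xrightarrow{\alpha}$, $\alpha\in\mathit{Act}\cup\{\tau\}$: least relation with $a.m\xrightarrow{a}m$; $m\xrightarrow{\alpha}m'$ implies $m+n\xrightarrow{\alpha}m'$ and $n+m\xrightarrow{\alpha}m'$; $v\xrightarrow{\alpha}v$ for each verdict $v$ (variables have no transitions); for $s=a_1\dots a_k$, $m\xrightarrow{s}m'$ means $m=m_0\xrightarrow{a_1}m_1\cdots\xrightarrow{a_k}m_k=m'$. Weak transitions: $m\xRightarrow{\varepsilon}m'$ iff $m(\xrightarrow{\tau})^*m'$; $m\xRightarrow{a}m'$ iff $m\xRightarrow{\varepsilon}\xrightarrow{a}\xRightarrow{\varepsilon}m'$;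 $m\xRightarrow{as'}m'$ ($s'\ne\varepsilon$) iff $m\xRightarrow{a}m_1\xRightarrow{s'}m'$. For closed $m$, $L_a(m)=\{s\mid m\xRightarrow{s}\mathit{yes}\}$, $L_r(m)=\{s\mid m\xRightarrow{s}\mathit{no}\}$; $m\simeq n$ for closed terms iff $L_a$ and $L_r$ coincide, and for open terms iff $\sigma(m)\simeq\sigma(n)$ for every closed substitution $\sigma$. An open reduced normal form is a term $m=\sum_{a\in A}a.m_a+\sum_{i\in I}x_i\ [+\mathit{yes}]\ [+\mathit{no}]$ with $A\subseteq\mathit{Act}$ finite (one summand per $a$), $\{x_i\}_{i\in I}$ a finite set of variables, each $m_a$ different from $\mathit{end}$ and itself an open reduced normal form, such that: if $v\in\{\mathit{yes},\mathit{no}\}$ is a summand then each $m_a$ is $v$-free; if both $\mathit{yes}$ and $\mathit{no}$ are summands then $m=\mathit{yes}+\mathit{no}$; if $\mathit{yes}$ is a summand and $m\xrightarrow{s}\mathit{no}+m'$ then $m'=\mathit{end}$; if $\mathit{no}$ is a summand and $m\xrightarrow{s}\mathit{yes}+m'$ then $m'=\mathit{end}$. *)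

From Stdlib Require Import List.
Import ListNotations.
Set Implicit Arguments.

Inductive verdict := VEnd | VYes | VNo.

Section Monitors.
Variables (Act Var : Type).

Inductive term :=
| TV : verdict -> term
| TPre : Act -> term -> term
| TPlus : term -> term -> term
| TVar : Var -> term.

Definition End := TV VEnd.
Definition Yes := TV VYes.
Definition No := TV VNo.

Inductive eqm : term -> term -> Prop :=
| eqm_refl t : eqm t t
| eqm_sym t u : eqm t u -> eqm u t
| eqm_trans t u w : eqm t u -> eqm u w -> eqm t w
| eqm_comm t u : eqm (TPlus t u) (TPlus u t)
| eqm_assoc t u w : eqm (TPlus t (TPlus u w)) (TPlus (TPlus t u) w)
| eqm_idem t : eqm (TPlus t t) t
| eqm_unit t : eqm (TPlus t End) t
| eqm_pre a t u : eqm t u -> eqm (TPre a t) (TPre a u)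
| eqm_plus t t' u u' : eqm t t' -> eqm u u' -> eqm (TPlus t u) (TPlus t' u').

Definition has_summand (x : Var) (t : term) : Prop :=
  exists t', eqm t (TPlus (TVar x) t').

Fixpoint occurs (v : verdict) (t : term) : Prop :=
  match t with
  | TV w => w = v
  | TPre _ t => occurs v t
  | TPlus t u => occurs v t \/ occurs v u
  | TVar _ => False
  end.

Definition vfree (v : verdict) (t : term) : Prop := ~ occurs v t.

Fixpoint closed (t : term) : Prop :=
  match t with
  | TV _ => True
  | TPre _ t => closed t
  | TPlus t u => closed t /\ closed u
  | TVar _ => False
  end.

Fixpoint subst (sigma : Var -> term) (t : term) : term :=
  match t with
  | TV v => TV v
  | TPre a t => TPre a (subst sigma t)
  | TPlus t u => TPlus (subst sigma t) (subst sigma u)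
  | TVar x => sigma x
  end.

(* single transitions; None is tau *)
Inductive step : term -> option Act -> term -> Prop :=
| step_pre a t : step (TPre a t) (Some a) t
| step_plusL t u al t' : step t al t' -> step (TPlus t u) al t'
| step_plusR t u al u' : step u al u' -> step (TPlus t u) al u'
| step_verd v al : step (TV v) al (TV v).

Inductive steps : term -> list Act -> term -> Prop :=
| steps_nil t : steps t [] t
| steps_cons t a t1 s t' : step t (Some a) t1 -> steps t1 s t' -> steps t (a :: s) t'.

Inductive wtau : term -> term -> Prop :=
| wtau_refl t : wtau t t
| wtau_step t t1 t' : step t None t1 -> wtau t1 t' -> wtau t t'.

Fixpoint weak (t : term) (s : list Act) (t' : term) : Prop :=
  match s with
  | [] => wtau t t'
  | a :: s' => exists t1 t2 t3,
      wtau t t1 /\ step t1 (Some a) t2 /\ wtau t2 t3 /\ weak t3 s' t'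
  end.

Definition L_a (t : term) (s : list Act) : Prop := weak t s Yes.
Definition L_r (t : term) (s : list Act) : Prop := weak t s No.

(* equivalence: for closed terms, equal languages; for open terms, equal
   languages under every closed substitution (for closed terms the two
   definitions coincide since substitution is the identity on them). *)
Definition meq (m n : term) : Prop :=
  forall sigma : Var -> term, (forall x, closed (sigma x)) ->
    (forall s, L_a (subst sigma m) s <-> L_a (subst sigma n) s) /\
    (forall s, L_r (subst sigma m) s <-> L_r (subst sigma n) s).

Fixpoint sum_list (l : list term) : term :=
  match l with
  | [] => End
  | t :: l' => TPlus t (sum_list l')
  end.

Definition nf_build (acts : list (Act * term)) (vars : list Var) (byes bno : bool) : term :=
  sum_list (map (fun p => TPre (fst p) (snd p)) acts ++ map TVar vars
            ++ (if byes then [Yes] else []) ++ (if bno then [No] else [])).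

Inductive ornf : term -> Prop :=
| ornf_intro (m : term) (acts : list (Act * term)) (vars : list Var) (byes bno : bool) :
    eqm m (nf_build acts vars byes bno) ->
    NoDup (map fst acts) ->
    (forall p, In p acts -> ornf (snd p) /\ ~ eqm (snd p) End) ->
    (byes = true -> forall p, In p acts -> vfree VYes (snd p)) ->
    (bno = true -> forall p, In p acts -> vfree VNo (snd p)) ->
    (byes = true -> bno = true -> eqm m (TPlus Yes No)) ->
    (byes = true -> forall s t m', s <> [] -> steps m s t -> eqm t (TPlus No m') -> eqm m' End) ->
    (bno = true -> forall s t m', s <> [] -> steps m s t -> eqm t (TPlus Yes m') -> eqm m' End) ->
    ornf m.

End Monitors.

(* The substitution sending every variable to end, and the one sending x to a
   verdict v and every other variable to end, are closed; applied to m ~ n they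
   say that the same prefixes of a trace lead, from m and from n, to a term with
   summand v (resp. with summand v or x).  In a reduced normal form no path to
   an x-summand meets both a yes- and a no-summand, so some v in {yes, no} is
   reached from m along no prefix of s.  The x-summand that m reaches along s is
   then reached from n along a prefix of s, which by the same equivalence is
   reached from m too, and minimality of s forces that prefix to be s. *)

From Stdlib Require Import List ClassicalEpsilon.
Import ListNotations.

Set Implicit Arguments.
Unset Strict Implicit.

Arguments TV {Act Var} _.
Arguments TVar {Act Var} _.
Arguments End {Act Var}.
Arguments Yes {Act Var}.
Arguments No {Act Var}.

Section Monitors.

Variables Act Var : Type.
Notation T := (term Act Var).

(** * Action transitions and top-level summands *)

(* [step] lets a verdict absorb every action; [act_step] keeps only the
   transitions that consume a prefix. *)
Inductive act_step : T -> Act -> T -> Prop :=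
| act_step_pre a t : act_step (TPre a t) a t
| act_step_plusl t u a t' : act_step t a t' -> act_step (TPlus t u) a t'
| act_step_plusr t u a u' : act_step u a u' -> act_step (TPlus t u) a u'.

Inductive act_steps : T -> list Act -> T -> Prop :=
| act_steps_nil t : act_steps t [] t
| act_steps_cons t a t1 s t' :
    act_step t a t1 -> act_steps t1 s t' -> act_steps t (a :: s) t'.

Fixpoint top_var (x : Var) (t : T) : Prop :=
  match t with
  | TVar y => y = x
  | TPlus t u => top_var x t \/ top_var x u
  | _ => False
  end.

Fixpoint top_verdict (v : verdict) (t : T) : Prop :=
  match t with
  | TV w => w = v
  | TPlus t u => top_verdict v t \/ top_verdict v u
  | _ => False
  end.

Fixpoint verdict_only (t : T) : Prop :=
  match t with
  | TV _ => True
  | TPlus t u => verdict_only t /\ verdict_only u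
  | _ => False
  end.

Lemma act_step_plus_iff t u a r :
  act_step (TPlus t u) a r <-> act_step t a r \/ act_step u a r.
Proof.
  split; [inversion 1; auto |].
  intros [H | H]; [apply act_step_plusl | apply act_step_plusr]; exact H.
Qed.

Lemma act_step_verdict_only t a r : verdict_only t -> ~ act_step t a r.
Proof. intros Ht H; revert Ht; induction H; simpl; tauto. Qed.

Lemma top_var_verdict_only x t : verdict_only t -> ~ top_var x t.
Proof. induction t; simpl; tauto. Qed.

Lemma act_steps_nil_inv t r : act_steps t [] r -> r = t.
Proof. inversion 1; reflexivity. Qed.

Lemma act_steps_cons_inv t a s r :
  act_steps t (a :: s) r -> exists t1, act_step t a t1 /\ act_steps t1 s r.
Proof. inversion 1; eauto. Qed.

Lemma act_steps_app_inv t u z r :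
  act_steps t (u ++ z) r -> exists q, act_steps t u q /\ act_steps q z r.
Proof.
  revert t; induction u as [| a u IH]; simpl; intros t H.
  - exists t; split; [constructor | exact H].
  - destruct (act_steps_cons_inv H) as [t1 [H1 H2]].
    destruct (IH _ H2) as [q [Hq Hr]].
    exists q; split; [econstructor; eassumption | exact Hr].
Qed.

(** * Invariance under the structural laws *)

Lemma eqm_top_var x t u : eqm t u -> (top_var x t <-> top_var x u).
Proof. induction 1; simpl in *; tauto. Qed.

Lemma eqm_top_verdict v t u : v <> VEnd -> eqm t u -> (top_verdict v t <-> top_verdict v u).
Proof. intros Hv; induction 1; simpl in *; intuition congruence. Qed.

Definition simulates (t u : T) : Prop :=
  forall a t', act_step t a t' -> exists u', act_step u a u' /\ eqm t' u'.

Lemma simulates_incl t u :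
  (forall a r, act_step t a r -> act_step u a r) -> simulates t u.
Proof. intros H a r Hr; exists r; split; [apply H; exact Hr | apply eqm_refl]. Qed.

Lemma simulates_trans t u w : simulates t u -> simulates u w -> simulates t w.
Proof.
  intros H1 H2 a t' Ht.
  destruct (H1 _ _ Ht) as [u' [Hu Etu]].
  destruct (H2 _ _ Hu) as [w' [Hw Euw]].
  exists w'; split; [exact Hw | eapply eqm_trans; eassumption].
Qed.

Lemma eqm_simulates t u : eqm t u -> simulates t u /\ simulates u t.
Proof.
  induction 1 as [t | t u _ IH | t u w _ [IH1 IH2] _ [IH3 IH4] | t u | t u w | t | t
                 | a t u E _ | t t' u u' _ [IH1 IH2] _ [IH3 IH4]].
  - split; apply simulates_incl; auto.
  - tauto.
  - split; eapply simulates_trans; eassumption.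
  - split; apply simulates_incl; intros b r; rewrite !act_step_plus_iff; tauto.
  - split; apply simulates_incl; intros b r; rewrite !act_step_plus_iff; tauto.
  - split; apply simulates_incl; intros b r; rewrite ?act_step_plus_iff; tauto.
  - split; apply simulates_incl; intros b r; rewrite ?act_step_plus_iff;
      pose proof (act_step_verdict_only (t := End) (a := b) (r := r) I); tauto.
  - split; intros b r H; inversion H; subst; eexists;
      (split; [apply act_step_pre |]); [exact E | apply eqm_sym; exact E].
  - split; intros b r; rewrite act_step_plus_iff; intros [H | H].
    + destruct (IH1 _ _ H) as [r' [Hr E]]; exists r'; split; [apply act_step_plusl |]; assumption.
    + destruct (IH3 _ _ H) as [r' [Hr E]]; exists r'; split; [apply act_step_plusr |]; assumption.
    + destruct (IH2 _ _ H) as [r' [Hr E]]; exists r'; split; [apply act_step_plusl |]; assumption.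
    + destruct (IH4 _ _ H) as [r' [Hr E]]; exists r'; split; [apply act_step_plusr |]; assumption.
Qed.

Lemma eqm_act_step t u a t' :
  eqm t u -> act_step t a t' -> exists u', act_step u a u' /\ eqm t' u'.
Proof. intros E; exact (proj1 (eqm_simulates E) a t'). Qed.

Lemma eqm_act_steps t u s r :
  eqm t u -> act_steps t s r -> exists r', act_steps u s r' /\ eqm r r'.
Proof.
  intros E H; revert u E; induction H as [t | t a t1 s r H _ IH]; intros u E.
  - exists u; split; [constructor | exact E].
  - destruct (eqm_act_step E H) as [u1 [Hu1 E1]].
    destruct (IH _ E1) as [r' [Hr' Er]].
    exists r'; split; [econstructor; eassumption | exact Er].
Qed.

Lemma eqm_plus_summand_l (l t u t' : T) :
  eqm t (TPlus l t') -> eqm (TPlus t u) (TPlus l (TPlus t' u)).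
Proof.
  intros H; eapply eqm_trans.
  - apply eqm_plus; [exact H | apply eqm_refl].
  - apply eqm_sym, eqm_assoc.
Qed.

Lemma eqm_plus_summand_r (l t u u' : T) :
  eqm u (TPlus l u') -> eqm (TPlus t u) (TPlus l (TPlus u' t)).
Proof. intros H; eapply eqm_trans; [apply eqm_comm | apply eqm_plus_summand_l; exact H]. Qed.

Lemma top_var_summand x t : top_var x t -> has_summand x t.
Proof.
  unfold has_summand; induction t as [w | a t _ | t IHt u IHu | y]; simpl; try tauto.
  - intros [H | H].
    + destruct (IHt H) as [t' E]; eexists; apply eqm_plus_summand_l; exact E.
    + destruct (IHu H) as [u' E]; eexists; apply eqm_plus_summand_r; exact E.
  - intros ->; exists End; apply eqm_sym, eqm_unit.
Qed.

Lemma top_verdict_summand v t : top_verdict v t -> exists t', eqm t (TPlus (TV v) t').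
Proof.
  induction t as [w | a t _ | t IHt u IHu | y]; simpl; try tauto.
  - intros ->; exists End; apply eqm_sym, eqm_unit.
  - intros [H | H].
    + destruct (IHt H) as [t' E]; eexists; apply eqm_plus_summand_l; exact E.
    + destruct (IHu H) as [u' E]; eexists; apply eqm_plus_summand_r; exact E.
Qed.

Lemma has_summand_top_var x t : has_summand x t -> top_var x t.
Proof. intros [t' E]; apply (eqm_top_var x E); simpl; auto. Qed.

Lemma eqm_verdict_only_no_top_var p q z r x :
  verdict_only p -> eqm q p -> act_steps q z r -> ~ top_var x r.
Proof.
  intros Hp E H; destruct H as [q | q a q1 z r H _].
  - rewrite (eqm_top_var x E); exact (top_var_verdict_only Hp).
  - destruct (eqm_act_step E H) as [p' [Hp' _]].
    destruct (act_step_verdict_only Hp Hp').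
Qed.

(** * Weak transitions to verdicts *)

Lemma act_step_step t a t' : act_step t a t' -> step t (Some a) t'.
Proof. induction 1; [apply step_pre | apply step_plusL | apply step_plusR]; assumption. Qed.

Lemma act_steps_steps t s r : act_steps t s r -> steps t s r.
Proof. induction 1; econstructor; eauto using act_step_step. Qed.

Lemma step_cases t al t' :
  step t al t' ->
  (exists a, al = Some a /\ act_step t a t') \/ (exists w, t' = TV w /\ top_verdict w t).
Proof.
  induction 1 as [a t | t u al t' _ IH | t u al u' _ IH | v al].
  - left; exists a; split; [reflexivity | apply act_step_pre].
  - destruct IH as [[a [-> H]] | [w [-> H]]].
    + left; exists a; split; [reflexivity | apply act_step_plusl; exact H].
    + right; exists w; simpl; auto.
  - destruct IH as [[a [-> H]] | [w [-> H]]].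
    + left; exists a; split; [reflexivity | apply act_step_plusr; exact H].
    + right; exists w; simpl; auto.
  - right; exists v; simpl; auto.
Qed.

Lemma step_verdict w al (t : T) : step (TV w) al t -> t = TV w.
Proof. inversion 1; reflexivity. Qed.

Lemma steps_verdict w s (t : T) : steps (TV w) s t -> t = TV w.
Proof.
  intros H; remember (TV w) as u eqn:Eu; induction H as [u | u a u1 s t H _ IH]; [congruence |].
  subst u; rewrite (step_verdict H) in IH; exact (IH eq_refl).
Qed.

Lemma wtau_verdict w (t : T) : wtau (TV w) t -> t = TV w.
Proof.
  intros H; remember (TV w) as u eqn:Eu; induction H as [u | u u1 t H _ IH]; [congruence |].
  subst u; rewrite (step_verdict H) in IH; exact (IH eq_refl).
Qed.

Lemma wtau_cases t t' : wtau t t' -> t' = t \/ exists w, t' = TV w /\ top_verdict w t.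
Proof.
  induction 1 as [t | t t1 t' H H1 _]; auto.
  destruct (step_cases H) as [[a [Ha _]] | [w [-> Hw]]]; [discriminate |].
  right; exists w; split; [exact (wtau_verdict H1) | exact Hw].
Qed.

Lemma steps_act_steps t s r : steps t s r -> act_steps t s r \/ exists w, r = TV w.
Proof.
  induction 1 as [t | t a t1 s r H H1 IH]; [left; constructor |].
  destruct (step_cases H) as [[b [Hb Ha]] | [w [-> _]]].
  - injection Hb as <-; destruct IH as [IH | IH]; [left; econstructor; eassumption | right; exact IH].
  - right; exists w; exact (steps_verdict H1).
Qed.

(* A verdict absorbs all further actions, so [weak t u (TV v)] only constrains
   a prefix of [u]; see [weak_iff_prefix_verdict]. *)
Definition prefix_verdict (t : T) (u : list Act) (v : verdict) : Prop :=
  exists u1 u2 r, u = u1 ++ u2 /\ act_steps t u1 r /\ top_verdict v r.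

Definition prefix_var (x : Var) (t : T) (u : list Act) : Prop :=
  exists u1 u2 r, u = u1 ++ u2 /\ act_steps t u1 r /\ top_var x r.

Lemma prefix_verdict_here t u v : top_verdict v t -> prefix_verdict t u v.
Proof. intros H; exists [], u, t; split; [reflexivity | split; [constructor | exact H]]. Qed.

Lemma prefix_verdict_cons t t1 a u v :
  act_step t a t1 -> prefix_verdict t1 u v -> prefix_verdict t (a :: u) v.
Proof.
  intros H [u1 [u2 [r [-> [Hr Hv]]]]].
  exists (a :: u1), u2, r; split; [reflexivity | split; [econstructor; eassumption | exact Hv]].
Qed.

Lemma prefix_verdict_app t u z v : prefix_verdict t u v -> prefix_verdict t (u ++ z) v.
Proof.
  intros [u1 [u2 [r [-> [Hr Hv]]]]].
  exists u1, (u2 ++ z), r; split; [apply eq_sym, app_assoc | split; assumption].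
Qed.

Lemma prefix_var_self x t u r : act_steps t u r -> top_var x r -> prefix_var x t u.
Proof. intros Hr Hx; exists u, [], r; split; [apply eq_sym, app_nil_r | split; assumption]. Qed.

Lemma prefix_verdict_nil_inv t v : prefix_verdict t [] v -> top_verdict v t.
Proof.
  intros [u1 [u2 [r [E [Hr Hv]]]]].
  destruct (app_eq_nil _ _ (eq_sym E)) as [-> _].
  rewrite <- (act_steps_nil_inv Hr); exact Hv.
Qed.

Lemma prefix_verdict_cons_inv t a u v :
  prefix_verdict t (a :: u) v ->
  top_verdict v t \/ exists t1, act_step t a t1 /\ prefix_verdict t1 u v.
Proof.
  intros [[| b u1] [u2 [r [E [Hr Hv]]]]].
  - left; rewrite <- (act_steps_nil_inv Hr); exact Hv.
  - right; injection E as -> ->.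
    destruct (act_steps_cons_inv Hr) as [t1 [H1 H2]].
    exists t1; split; [exact H1 | exists u1, u2, r; split; [reflexivity | split; assumption]].
Qed.

Lemma prefix_verdict_verdict w u v : prefix_verdict (TV w) u v -> w = v.
Proof.
  intros [[| a u1] [u2 [r [_ [Hr Hv]]]]].
  - rewrite (act_steps_nil_inv Hr) in Hv; exact Hv.
  - destruct (act_steps_cons_inv Hr) as [t1 [H _]]; inversion H.
Qed.

Lemma prefix_verdict_eqm t t' u v :
  v <> VEnd -> eqm t t' -> prefix_verdict t u v -> prefix_verdict t' u v.
Proof.
  intros Hv E [u1 [u2 [r [-> [Hr Hr']]]]].
  destruct (eqm_act_steps E Hr) as [r2 [Hr2 E2]].
  exists u1, u2, r2; split; [reflexivity | split; [exact Hr2 |]].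
  exact (proj1 (eqm_top_verdict Hv E2) Hr').
Qed.

Lemma wtau_prefix_verdict t t' u v :
  wtau t t' -> prefix_verdict t' u v -> prefix_verdict t u v.
Proof.
  intros H Hp; destruct (wtau_cases H) as [-> | [w [-> Hw]]]; [exact Hp |].
  apply prefix_verdict_here; rewrite <- (prefix_verdict_verdict Hp); exact Hw.
Qed.

Lemma weak_prefix_verdict t u v : weak t u (TV v) -> prefix_verdict t u v.
Proof.
  revert t; induction u as [| a u IH]; simpl; intros t H.
  - apply (wtau_prefix_verdict H), prefix_verdict_here; reflexivity.
  - destruct H as [t1 [t2 [t3 [H1 [H2 [H3 H4]]]]]].
    apply (wtau_prefix_verdict H1).
    pose proof (wtau_prefix_verdict H3 (IH _ H4)) as Hp.
    destruct (step_cases H2) as [[b [Hb Ha]] | [w [-> Hw]]].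
    + injection Hb as <-; exact (prefix_verdict_cons Ha Hp).
    + apply prefix_verdict_here; rewrite <- (prefix_verdict_verdict Hp); exact Hw.
Qed.

Lemma top_verdict_step v t al : top_verdict v t -> step t al (TV v).
Proof.
  induction t as [w | a t _ | t IHt u IHu | y]; simpl; try tauto.
  - intros ->; apply step_verd.
  - intros [H | H]; [apply step_plusL, IHt | apply step_plusR, IHu]; exact H.
Qed.

Lemma weak_verdict_loop v u : weak (TV v : T) u (TV v).
Proof.
  induction u as [| a u IH]; simpl; [constructor |].
  exists (TV v), (TV v), (TV v); repeat split; auto using wtau_refl, step_verd.
Qed.

Lemma top_verdict_weak v t u : top_verdict v t -> weak t u (TV v).
Proof.
  intros H; destruct u as [| a u]; simpl.
  - eapply wtau_step; [apply top_verdict_step; exact H | apply wtau_refl].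
  - exists t, (TV v), (TV v); repeat split; auto using wtau_refl, top_verdict_step, weak_verdict_loop.
Qed.

Lemma act_steps_weak t u1 r u2 t' :
  act_steps t u1 r -> weak r u2 t' -> weak t (u1 ++ u2) t'.
Proof.
  induction 1 as [| t a t1 s r H _ IH]; simpl; intros Hw; [exact Hw |].
  exists t, t1, t1; repeat split; auto using wtau_refl, act_step_step.
Qed.

Lemma weak_iff_prefix_verdict t u v : weak t u (TV v) <-> prefix_verdict t u v.
Proof.
  split; [apply weak_prefix_verdict |].
  intros [u1 [u2 [r [-> [Hr Hv]]]]]; eapply act_steps_weak; [exact Hr | apply top_verdict_weak; exact Hv].
Qed.

(** * Substituting verdicts for variables *)

Definition verdict_subst (sg : Var -> T) : Prop := forall y, exists w, sg y = TV w.

Lemma act_step_subst sg t a r : act_step t a r -> act_step (subst sg t) a (subst sg r).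
Proof. induction 1; simpl; [apply act_step_pre | apply act_step_plusl | apply act_step_plusr]; assumption. Qed.

Lemma act_steps_subst sg t u r : act_steps t u r -> act_steps (subst sg t) u (subst sg r).
Proof. induction 1; econstructor; eauto using act_step_subst. Qed.

Lemma act_step_subst_inv sg t a r' :
  verdict_subst sg -> act_step (subst sg t) a r' -> exists r, act_step t a r /\ r' = subst sg r.
Proof.
  intros Hs; revert r'; induction t as [w | b t _ | t IHt u IHu | y]; simpl; intros r' H.
  - inversion H.
  - inversion H; subst; exists t; split; [apply act_step_pre | reflexivity].
  - apply act_step_plus_iff in H as [H | H].
    + destruct (IHt _ H) as [r [Hr ->]]; exists r; split; [apply act_step_plusl; exact Hr | reflexivity].
    + destruct (IHu _ H) as [r [Hr ->]]; exists r; split; [apply act_step_plusr; exact Hr | reflexivity].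
  - destruct (Hs y) as [w Hw]; rewrite Hw in H; inversion H.
Qed.

Lemma act_steps_subst_inv sg t u r' :
  verdict_subst sg -> act_steps (subst sg t) u r' -> exists r, act_steps t u r /\ r' = subst sg r.
Proof.
  intros Hs; revert t; induction u as [| a u IH]; intros t H.
  - exists t; split; [constructor | exact (act_steps_nil_inv H)].
  - destruct (act_steps_cons_inv H) as [t1' [H1 H2]].
    destruct (act_step_subst_inv Hs H1) as [t1 [Ht1 ->]].
    destruct (IH _ H2) as [r [Hr ->]].
    exists r; split; [econstructor; eassumption | reflexivity].
Qed.

Lemma top_verdict_subst_iff sg t v :
  verdict_subst sg ->
  (top_verdict v (subst sg t) <-> top_verdict v t \/ exists y, top_var y t /\ sg y = TV v).
Proof.
  intros Hs; induction t as [w | a t _ | t IHt u IHu | y]; simpl.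
  - firstorder.
  - firstorder.
  - rewrite IHt, IHu; firstorder.
  - destruct (Hs y) as [w Hw]; rewrite Hw; simpl; split.
    + intros <-; right; exists y; auto.
    + intros [[] | [y' [<- Hy]]]; congruence.
Qed.

Lemma prefix_verdict_subst sg t u v :
  verdict_subst sg ->
  (prefix_verdict (subst sg t) u v <->
   prefix_verdict t u v \/ exists y, sg y = TV v /\ prefix_var y t u).
Proof.
  intros Hs; split.
  - intros [u1 [u2 [r' [-> [Hr Hv]]]]].
    destruct (act_steps_subst_inv Hs Hr) as [r [Hr' ->]].
    apply (top_verdict_subst_iff _ _ Hs) in Hv as [Hv | [y [Hy Hsy]]].
    + left; exists u1, u2, r; split; [reflexivity | split; assumption].
    + right; exists y; split; [exact Hsy |].
      exists u1, u2, r; split; [reflexivity | split; assumption].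
  - intros [[u1 [u2 [r [-> [Hr Hv]]]]] | [y [Hsy [u1 [u2 [r [-> [Hr Hy]]]]]]]];
      exists u1, u2, (subst sg r); (split; [reflexivity | split; [apply act_steps_subst; exact Hr |]]);
      apply (top_verdict_subst_iff _ _ Hs); [left; exact Hv | right; exists y; auto].
Qed.

Lemma prefix_verdict_subst_end t u v :
  v <> VEnd -> (prefix_verdict (subst (fun _ => End) t) u v <-> prefix_verdict t u v).
Proof.
  intros Hv; rewrite prefix_verdict_subst by (intros y; exists VEnd; reflexivity).
  split; [intros [H | [y [Hy _]]]; [exact H | injection Hy; congruence] | auto].
Qed.

Definition verdict_at (x : Var) (v : verdict) : Var -> T :=
  fun y => if excluded_middle_informative (y = x) then TV v else End.

Lemma prefix_verdict_subst_at x t u v :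
  v <> VEnd ->
  (prefix_verdict (subst (verdict_at x v) t) u v <-> prefix_verdict t u v \/ prefix_var x t u).
Proof.
  intros Hv; rewrite prefix_verdict_subst.
  - split; intros [H | H]; auto; right.
    + destruct H as [y [Hy H]]; unfold verdict_at in Hy.
      destruct (excluded_middle_informative (y = x)) as [<- | _]; [exact H | injection Hy; congruence].
    + exists x; split; [| exact H].
      unfold verdict_at; destruct (excluded_middle_informative (x = x)); congruence.
  - intros y; unfold verdict_at; destruct (excluded_middle_informative (y = x)); eexists; reflexivity.
Qed.

Lemma meq_subst_prefix_verdict m n sg u v :
  meq m n -> verdict_subst sg -> v <> VEnd ->
  (prefix_verdict (subst sg m) u v <-> prefix_verdict (subst sg n) u v).
Proof.
  intros Hmn Hs Hv.
  assert (Hc : forall y, closed (sg y)) by (intros y; destruct (Hs y) as [w ->]; exact I).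
  destruct (Hmn sg Hc) as [Ha Hr].
  rewrite <- !weak_iff_prefix_verdict.
  destruct v; [contradiction | exact (Ha u) | exact (Hr u)].
Qed.

Lemma meq_prefix_verdict m n u v :
  meq m n -> v <> VEnd -> (prefix_verdict m u v <-> prefix_verdict n u v).
Proof.
  intros Hmn Hv.
  rewrite <- (prefix_verdict_subst_end m u Hv), <- (prefix_verdict_subst_end n u Hv).
  apply meq_subst_prefix_verdict; [exact Hmn | intros y; exists VEnd; reflexivity | exact Hv].
Qed.

Lemma meq_prefix_verdict_or_var m n x u v :
  meq m n -> v <> VEnd ->
  (prefix_verdict m u v \/ prefix_var x m u <-> prefix_verdict n u v \/ prefix_var x n u).
Proof.
  intros Hmn Hv.
  rewrite <- (prefix_verdict_subst_at x m u Hv), <- (prefix_verdict_subst_at x n u Hv).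
  apply meq_subst_prefix_verdict; [exact Hmn | | exact Hv].
  intros y; unfold verdict_at; destruct (excluded_middle_informative (y = x)); eexists; reflexivity.
Qed.

Lemma prefix_var_transfer m n x v s :
  (forall u, prefix_verdict m u v <-> prefix_verdict n u v) ->
  (forall u, prefix_verdict m u v \/ prefix_var x m u <-> prefix_verdict n u v \/ prefix_var x n u) ->
  ~ prefix_verdict m s v -> prefix_var x m s ->
  (forall u z r, s = u ++ z -> z <> [] -> act_steps m u r -> ~ top_var x r) ->
  exists r, act_steps n s r /\ top_var x r.
Proof.
  intros Hv Hvx Hns Hms Hmin.
  destruct (proj1 (Hvx s) (or_intror Hms)) as [Hn | [u1 [z [r [-> [Hr Hx]]]]]].
  { exfalso; apply Hns, Hv, Hn. }
  destruct (proj2 (Hvx u1) (or_intror (prefix_var_self Hr Hx)))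
    as [Hm | [u0 [z0 [r0 [-> [Hr0 Hx0]]]]]].
  { exfalso; apply Hns, prefix_verdict_app, Hm. }
  destruct z as [| a z].
  - rewrite app_nil_r; exists r; split; assumption.
  - exfalso; apply (Hmin u0 (z0 ++ a :: z) r0); [apply eq_sym, app_assoc | | exact Hr0 | exact Hx0].
    intros E; destruct z0; discriminate E.
Qed.

(** * Reduced normal forms *)

Definition opposite (v w : verdict) : Prop :=
  (v = VYes /\ w = VNo) \/ (v = VNo /\ w = VYes).

Lemma opposite_sym v w : opposite v w -> opposite w v.
Proof. unfold opposite; tauto. Qed.

Lemma opposite_not_end v w : opposite v w -> v <> VEnd /\ w <> VEnd.
Proof. intros [[-> ->] | [-> ->]]; split; discriminate. Qed.

Lemma NoDup_map_fst_eq (B : Type) (l : list (Act * B)) p p' :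
  NoDup (map fst l) -> In p l -> In p' l -> fst p = fst p' -> p = p'.
Proof.
  induction l as [| q l IH]; simpl; intros Hn H H' E; [contradiction |].
  inversion Hn as [| ? ? Hq Hl]; subst.
  destruct H as [<- | H]; destruct H' as [<- | H']; auto.
  - exfalso; apply Hq; rewrite E; apply in_map; exact H'.
  - exfalso; apply Hq; rewrite <- E; apply in_map; exact H.
Qed.

Lemma sum_list_act_step l a r :
  act_step (sum_list l) a r -> exists e, In e l /\ act_step e a r.
Proof.
  induction l as [| e l IH]; simpl; intros H; [inversion H |].
  apply act_step_plus_iff in H as [H | H].
  - exists e; auto.
  - destruct (IH H) as [e' [He' H']]; exists e'; auto.
Qed.

Lemma sum_list_top_verdict l v :
  top_verdict v (sum_list l) -> v = VEnd \/ exists e, In e l /\ top_verdict v e.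
Proof.
  induction l as [| e l IH]; simpl; intros H; [auto |].
  destruct H as [H | H]; [right; exists e; auto |].
  destruct (IH H) as [? | [e' [He' H']]]; [left | right; exists e']; auto.
Qed.

Lemma nf_act_step acts vars byes bno a r :
  act_step (nf_build acts vars byes bno) a r -> exists p, In p acts /\ fst p = a /\ r = snd p.
Proof.
  unfold nf_build; intros H; destruct (sum_list_act_step H) as [e [He Hr]].
  rewrite !in_app_iff, !in_map_iff in He.
  destruct He as [[p [<- Hp]] | [[y [<- _]] | [He | He]]].
  - inversion Hr; subst; exists p; auto.
  - inversion Hr.
  - destruct byes; simpl in He; [destruct He as [<- | []] | contradiction]; inversion Hr.
  - destruct bno; simpl in He; [destruct He as [<- | []] | contradiction]; inversion Hr.
Qed.

Lemma nf_top_verdict acts vars byes bno v :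
  top_verdict v (nf_build acts vars byes bno) ->
  v = VEnd \/ (v = VYes /\ byes = true) \/ (v = VNo /\ bno = true).
Proof.
  unfold nf_build; intros H.
  destruct (sum_list_top_verdict H) as [-> | [e [He Hv]]]; [auto |].
  rewrite !in_app_iff, !in_map_iff in He.
  destruct He as [[p [<- _]] | [[y [<- _]] | [He | He]]]; simpl in Hv; try contradiction.
  - destruct byes; simpl in He; [destruct He as [<- | []] | contradiction]; simpl in Hv; subst; intuition.
  - destruct bno; simpl in He; [destruct He as [<- | []] | contradiction]; simpl in Hv; subst; intuition.
Qed.

Lemma eqm_nf_top_verdict m acts vars byes bno v :
  eqm m (nf_build acts vars byes bno) -> top_verdict v m ->
  v = VEnd \/ (v = VYes /\ byes = true) \/ (v = VNo /\ bno = true).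
Proof.
  intros E H; destruct v; [auto | |];
    apply (@nf_top_verdict acts vars); refine (proj1 (eqm_top_verdict _ E) H); discriminate.
Qed.

Lemma ornf_act_step m a m1 :
  ornf m -> act_step m a m1 -> exists q, ornf q /\ forall m2, act_step m a m2 -> eqm m2 q.
Proof.
  intros [m0 acts vars byes bno Heq Hnd Hsub _ _ _ _ _] H.
  destruct (eqm_act_step Heq H) as [r [Hr _]].
  destruct (nf_act_step Hr) as [p [Hp [Ha _]]].
  exists (snd p); split; [exact (proj1 (Hsub p Hp)) |].
  intros m2 H2.
  destruct (eqm_act_step Heq H2) as [r2 [Hr2 E2]].
  destruct (nf_act_step Hr2) as [p2 [Hp2 [Ha2 ->]]].
  replace p with p2 by (apply (NoDup_map_fst_eq Hnd); auto; congruence); exact E2.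
Qed.

Lemma ornf_act_steps_det m u q1 q2 :
  ornf m -> act_steps m u q1 -> act_steps m u q2 -> eqm q1 q2.
Proof.
  revert m q1 q2; induction u as [| a u IH]; intros m q1 q2 Ho H1 H2.
  - rewrite (act_steps_nil_inv H1), (act_steps_nil_inv H2); apply eqm_refl.
  - destruct (act_steps_cons_inv H1) as [m1 [Hm1 Hq1]].
    destruct (act_steps_cons_inv H2) as [m2 [Hm2 Hq2]].
    destruct (ornf_act_step Ho Hm1) as [q [Hq Hdet]].
    destruct (eqm_act_steps (Hdet _ Hm1) Hq1) as [r1 [Hr1 E1]].
    destruct (eqm_act_steps (Hdet _ Hm2) Hq2) as [r2 [Hr2 E2]].
    eapply eqm_trans; [exact E1 |].
    eapply eqm_trans; [exact (IH _ _ _ Hq Hr1 Hr2) | apply eqm_sym; exact E2].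
Qed.

Lemma ornf_yes_no m : ornf m -> top_verdict VYes m -> top_verdict VNo m -> eqm m (TPlus Yes No).
Proof.
  intros [m0 acts vars byes bno Heq _ _ _ _ Hyn _ _] Hy Hn; apply Hyn.
  - destruct (eqm_nf_top_verdict Heq Hy) as [? | [[_ ?] | [? _]]]; congruence.
  - destruct (eqm_nf_top_verdict Heq Hn) as [? | [[? _] | [_ ?]]]; congruence.
Qed.

Lemma ornf_opposite_end m v w s t m' :
  ornf m -> opposite v w -> top_verdict v m ->
  s <> [] -> act_steps m s t -> eqm t (TPlus (TV w) m') -> eqm m' End.
Proof.
  intros [m0 acts vars byes bno Heq _ _ _ _ _ Hyes Hno] [[-> ->] | [-> ->]] Hv Hs Ht E.
  - refine (Hyes _ s t m' Hs (act_steps_steps Ht) E).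
    destruct (eqm_nf_top_verdict Heq Hv) as [? | [[_ ?] | [? _]]]; congruence.
  - refine (Hno _ s t m' Hs (act_steps_steps Ht) E).
    destruct (eqm_nf_top_verdict Heq Hv) as [? | [[? _] | [_ ?]]]; congruence.
Qed.

Lemma ornf_both_verdicts_no_var m v w s r x :
  ornf m -> opposite v w -> top_verdict v m -> top_verdict w m ->
  act_steps m s r -> ~ top_var x r.
Proof.
  intros Ho Hvw Hv Hw.
  assert (E : eqm m (TPlus Yes No)).
  { destruct Hvw as [[-> ->] | [-> ->]]; [exact (ornf_yes_no Ho Hv Hw) | exact (ornf_yes_no Ho Hw Hv)]. }
  exact (eqm_verdict_only_no_top_var (p := TPlus Yes No) (conj I I) E).
Qed.

(* The reduced-form condition makes the term reached with summand [w] equal to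
   [w] (up to [end]), and by determinism so is the term [m] reaches along the
   same prefix of [a :: s]; a verdict has no variable summand. *)
Lemma ornf_opposite_no_var m v w a t1 s r x :
  ornf m -> opposite v w -> top_verdict v m ->
  act_step m a t1 -> prefix_verdict t1 s w -> act_steps m (a :: s) r -> ~ top_var x r.
Proof.
  intros Ho Hvw Hv Ha [u1 [u2 [r1 [-> [Hr1 Hw]]]]] H.
  destruct (top_verdict_summand Hw) as [m' E].
  assert (Hpath : act_steps m (a :: u1) r1) by (econstructor; eassumption).
  assert (Eend : eqm m' End).
  { refine (ornf_opposite_end Ho Hvw Hv _ Hpath E); discriminate. }
  destruct (act_steps_app_inv (u := a :: u1) H) as [q [Hq Hz]].
  refine (eqm_verdict_only_no_top_var (p := TPlus (TV w) End) (conj I I) _ Hz).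
  eapply eqm_trans; [exact (ornf_act_steps_det Ho Hq Hpath) |].
  eapply eqm_trans; [exact E | apply eqm_plus; [apply eqm_refl | exact Eend]].
Qed.

Lemma ornf_var_excludes_opposite_verdicts m s r x v w :
  ornf m -> opposite v w -> act_steps m s r -> top_var x r ->
  prefix_verdict m s v -> prefix_verdict m s w -> False.
Proof.
  intros Ho Hvw; revert m r Ho; induction s as [| a s IH]; intros m r Ho Hr Hx Hv Hw.
  - exact (ornf_both_verdicts_no_var Ho Hvw (prefix_verdict_nil_inv Hv)
             (prefix_verdict_nil_inv Hw) Hr Hx).
  - destruct (prefix_verdict_cons_inv Hv) as [Hv0 | [t1 [Ht1 Hv1]]];
      destruct (prefix_verdict_cons_inv Hw) as [Hw0 | [t2 [Ht2 Hw2]]].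
    + exact (ornf_both_verdicts_no_var Ho Hvw Hv0 Hw0 Hr Hx).
    + exact (ornf_opposite_no_var Ho Hvw Hv0 Ht2 Hw2 Hr Hx).
    + exact (ornf_opposite_no_var Ho (opposite_sym Hvw) Hw0 Ht1 Hv1 Hr Hx).
    + destruct (opposite_not_end Hvw) as [Hv_end Hw_end].
      destruct (act_steps_cons_inv Hr) as [m1 [Hm1 Hr1]].
      destruct (ornf_act_step Ho Hm1) as [q [Hq Hdet]].
      destruct (eqm_act_steps (Hdet _ Hm1) Hr1) as [r' [Hr' E]].
      apply (IH q r' Hq Hr').
      * exact (proj1 (eqm_top_var x E) Hx).
      * exact (prefix_verdict_eqm Hv_end (Hdet _ Ht1) Hv1).
      * exact (prefix_verdict_eqm Hw_end (Hdet _ Ht2) Hw2).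
Qed.

End Monitors.

Theorem mainTheorem11 (Act Var : Type) (HAct : inhabited Act)
  (m n : term Act Var) :
  meq m n -> ornf m ->
  forall (s : list Act) (x : Var) (m'' : term Act Var),
    steps m s m'' -> has_summand x m'' ->
    (forall (sp s2 : list Act) (t : term Act Var),
        s = sp ++ s2 -> s2 <> [] -> steps m sp t -> ~ has_summand x t) ->
    exists n'', steps n s n'' /\ has_summand x n''.
Proof.
  intros Hmn Hm s x m'' Hs Hsum Hmin.
  pose proof (has_summand_top_var Hsum) as Hx.
  assert (Hps : act_steps m s m'').
  { destruct (steps_act_steps Hs) as [H | [w ->]]; [exact H | contradiction Hx]. }
  assert (Hmin' : forall u z r, s = u ++ z -> z <> [] -> act_steps m u r -> ~ top_var x r).
  { intros u z r E Hz Hr Hrx; exact (Hmin u z r E Hz (act_steps_steps Hr) (top_var_summand Hrx)). }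
  assert (Hv : exists v, v <> VEnd /\ ~ prefix_verdict m s v).
  { destruct (classic (prefix_verdict m s VYes)) as [Hy | Hy].
    - exists VNo; split; [discriminate |]; intros Hn.
      exact (ornf_var_excludes_opposite_verdicts Hm (or_introl (conj eq_refl eq_refl)) Hps Hx Hy Hn).
    - exists VYes; split; [discriminate | exact Hy]. }
  destruct Hv as [v [Hv Hns]].
  destruct (prefix_var_transfer (fun u => meq_prefix_verdict u Hmn Hv)
              (fun u => meq_prefix_verdict_or_var x u Hmn Hv) Hns (prefix_var_self Hps Hx) Hmin')
    as [r [Hr Hrx]].
  exists r; split; [exact (act_steps_steps Hr) | exact (top_var_summand Hrx)].
Qed.
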